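(* Every flat $\curlyvee$-algebra $S$ is simple (every homomorphism from $S$ into a $\curlyvee$-algebra is either injective or constant), hence subdirectly irreducible.
   Context: A flat $\curlyvee$-algebra is an algebra $(S,\curlyvee)$ with a binary operation and an element $0\in S$ such that $a\curlyvee b=0$ whenever $a,b$ are distinct and both different from $0$, and $a\curlyvee a=a$, $a\curlyvee 0=0\curlyvee a=a$ for all $a\in S$. A $\curlyvee$-algebra is an algebra $(S,\curlyvee)$ such that, defining $a\sqcup b=a\curlyvee(a\curlyvee b)$ and $a\lesssim b$ iff $b\sqcup a=b$: $\sqcup$ is associative, $a\sqcup a=a$, $a\sqcup b=(a\sqcup b)\sqcup a$; $\curlyvee$ is commutative and idempotent; $(a\curlyvee b)\sqcup(a\sqcup b)=a\sqcup b$; $a\sqcup(b\curlyvee c)=(a\sqcup b)\curlyvee(a\sqcup c)$; and if $d\lesssim a,b,c,a\curlyvee b,b\curlyvee c$ then $d\lesssim a\curlyvee c$. *)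

Definition vsq {S : Type} (j : S -> S -> S) (a b : S) : S := j a (j a b).

Definition vle {S : Type} (j : S -> S -> S) (a b : S) : Prop := vsq j b a = b.

Definition is_vee_algebra (S : Type) (j : S -> S -> S) : Prop :=
  (forall a b c, vsq j a (vsq j b c) = vsq j (vsq j a b) c) /\
  (forall a, vsq j a a = a) /\
  (forall a b, vsq j a b = vsq j (vsq j a b) a) /\
  (forall a b, j a b = j b a) /\
  (forall a, j a a = a) /\
  (forall a b, vsq j (j a b) (vsq j a b) = vsq j a b) /\
  (forall a b c, vsq j a (j b c) = j (vsq j a b) (vsq j a c)) /\
  (forall a b c d, vle j d a -> vle j d b -> vle j d c ->
     vle j d (j a b) -> vle j d (j b c) -> vle j d (j a c)).

Definition is_flat (S : Type) (j : S -> S -> S) (z : S) : Prop :=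
  (forall a b, a <> b -> a <> z -> b <> z -> j a b = z) /\
  (forall a, j a a = a) /\
  (forall a, j a z = a /\ j z a = a).

Definition is_hom {S T : Type} (j : S -> S -> S) (k : T -> T -> T) (f : S -> T) : Prop :=
  forall a b, f (j a b) = k (f a) (f b).

Definition injective_fun {S T : Type} (f : S -> T) : Prop :=
  forall a b, f a = f b -> a = b.

Definition constant_fun {S T : Type} (f : S -> T) : Prop :=
  forall a b, f a = f b.

Definition is_simple (S : Type) (j : S -> S -> S) : Prop :=
  forall (T : Type) (k : T -> T -> T), is_vee_algebra T k ->
  forall f : S -> T, is_hom j k f -> injective_fun f \/ constant_fun f.

(* subdirectly irreducible (relative to the class of ∨-algebras):
   S is nontrivial and whenever a family of homomorphisms into ∨-algebras
   jointly separates points (i.e. S embeds subdirectly into the product of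
   their images), one of them is already injective. *)
Definition is_subdirectly_irreducible (S : Type) (j : S -> S -> S) : Prop :=
  (exists a b : S, a <> b) /\
  forall (I : Type) (T : I -> Type) (k : forall i, T i -> T i -> T i),
    (forall i, is_vee_algebra (T i) (k i)) ->
    forall f : forall i, S -> T i,
    (forall i, is_hom j (k i) (f i)) ->
    (forall a b, (forall i, f i a = f i b) -> a = b) ->
    exists i, injective_fun (f i).

(** A homomorphism [f] out of a flat algebra that identifies two distinct
    elements identifies some nonzero [c] with [0]: if neither element is [0]
    then [f 0 = f (a ∨ b) = f a ∨ f a = f a].  Once [f c = f 0] with [c <> 0],
    every nonzero [x <> c] satisfies [f x = f (0 ∨ x) = f (c ∨ x) = f 0], so [f]
    is constant; nothing about the target algebra is used.  Subdirect
    irreducibility follows from simplicity, since a separating family of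
    constant maps cannot exist on a nontrivial algebra. *)

From Stdlib Require Import Classical.

Section FlatHomomorphisms.

Variables (S T : Type) (j : S -> S -> S) (k : T -> T -> T) (z : S) (f : S -> T).
Hypothesis flat : is_flat S j z.
Hypothesis hom : is_hom j k f.

Lemma flat_hom_identifies_nonzero_with_zero (a b : S) :
  a <> b -> f a = f b -> exists c, c <> z /\ f c = f z.
Proof.
  destruct flat as [join_distinct [join_idem _]].
  intros Hab Hfab.
  destruct (classic (a = z)) as [-> | Ha]; [now exists b|].
  exists a; split; [exact Ha|].
  destruct (classic (b = z)) as [-> | Hb]; [exact Hfab|].
  rewrite <- (join_distinct a b Hab Ha Hb), hom, <- Hfab, <- hom, join_idem.
  reflexivity.
Qed.

Lemma flat_hom_const_of_nonzero_kernel (c : S) :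
  c <> z -> f c = f z -> forall x, f x = f z.
Proof.
  destruct flat as [join_distinct [_ join_zero]].
  intros Hc Hfc x.
  destruct (classic (x = z)) as [-> | Hx]; [reflexivity|].
  destruct (classic (x = c)) as [-> | Hxc]; [exact Hfc|].
  assert (Hzx : f x = f (j c x)).
  { destruct (join_zero x) as [_ Ezx].
    rewrite hom, Hfc, <- hom, Ezx. reflexivity. }
  rewrite Hzx, (join_distinct c x (fun e => Hxc (eq_sym e)) Hc Hx).
  reflexivity.
Qed.

Lemma flat_hom_injective_or_constant : injective_fun f \/ constant_fun f.
Proof.
  destruct (classic (injective_fun f)) as [Hinj | Hninj]; [now left | right].
  assert (Hcoll : exists a b, a <> b /\ f a = f b).
  { apply NNPP; intro Hno; apply Hninj; intros a b Hfab.
    apply NNPP; intro Hab; apply Hno; now exists a, b. }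
  destruct Hcoll as [a [b [Hab Hfab]]].
  destruct (flat_hom_identifies_nonzero_with_zero a b Hab Hfab) as [c [Hc Hfc]].
  intros x y.
  now rewrite (flat_hom_const_of_nonzero_kernel c Hc Hfc x),
              (flat_hom_const_of_nonzero_kernel c Hc Hfc y).
Qed.

End FlatHomomorphisms.

Lemma flat_simple (S : Type) (j : S -> S -> S) (z : S) :
  is_flat S j z -> is_simple S j.
Proof.
  intros flat T k _ f hom.
  exact (flat_hom_injective_or_constant S T j k z f flat hom).
Qed.

Lemma simple_subdirectly_irreducible (S : Type) (j : S -> S -> S) :
  is_simple S j -> (exists a b : S, a <> b) -> is_subdirectly_irreducible S j.
Proof.
  intros simple Hnontriv; split; [exact Hnontriv|].
  intros I T k Hk f hom separating.
  destruct Hnontriv as [a [b Hab]].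
  apply NNPP; intro Hno.
  apply Hab, separating; intro i.
  destruct (simple (T i) (k i) (Hk i) (f i) (hom i)) as [Hinj | Hconst].
  - exfalso; apply Hno; now exists i.
  - apply Hconst.
Qed.

Theorem proposition4p2 (S : Type) (j : S -> S -> S) (z : S) :
  is_flat S j z ->
  is_simple S j /\
  ((exists a b : S, a <> b) -> is_subdirectly_irreducible S j).
Proof.
  intro flat.
  split; [exact (flat_simple S j z flat)|].
  exact (simple_subdirectly_irreducible S j (flat_simple S j z flat)).
Qed.
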